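(* Let $(A,B)$ be a Katsura pair with KEP-action $(G_B,E_A)$, and let $E^0_{A,<\infty}=\{i\in E^0_A:(G_B)_i\text{ is finite}\}$. If $e\in E_A^1$ satisfies $B_e\ne0$ and $r(e)\in E^0_{A,<\infty}$, then $s(e)\in E^0_{A,<\infty}$.
   Context: Katsura pair: $N\in\mathbb{N}$, $A\in M_N(\mathbb{N})$ (nonnegative integers), $B\in M_N(\mathbb{Z})$ with $A_{ij}=0\Rightarrow B_{ij}=0$. Graph $E_A$: vertices $\{1,\dots,N\}$, edges $e_{i,j,m}$ ($0\le m<A_{ij}$), $r=i$, $s=j$; for an edge $e$, $B_e=B_{r(e)s(e)}$. The group bundle $\mathbb{Z}\times E_A^0$ (elements $a_i^k$, $a_i^ka_i^l=a_i^{k+l}$) acts on finite paths by $a_i^k\cdot e_{i,j,m}=e_{i,j,\hat m}$, $a_i^k|_{e_{i,j,m}}=a_j^{\hat k}$ where $kB_{ij}+m=\hat kA_{ij}+\hat m$, $0\le\hat m<A_{ij}$, extended recursively by $g\cdot(e\nu)=(g\cdot e)(g|_e\cdot\nu)$. $G_B$ is the quotient by the elements acting trivially (the KEP-action $(G_B,E_A)$), and $(G_B)_i$ is the cyclic group of elements of $G_B$ at the vertex $i$. *)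

From mathcomp Require Import all_boot all_order all_algebra.
Set Implicit Arguments. Unset Strict Implicit. Unset Printing Implicit Defensive.
Import GRing.Theory Num.Theory.
Local Open Scope ring_scope.

(* Katsura pair (A,B) on vertex set 'I_N (vertices 0..N-1 instead of 1..N).
   An edge e_{i,j,m} is encoded as the triple (i, j, m) with r = i, s = j,
   and m < A i j.  A finite path e_1 e_2 ... e_n is the list of its edges,
   with s(e_t) = r(e_{t+1}). *)

Definition edge (N : nat) := ('I_N * 'I_N * nat)%type.

Definition katsura_pair (N : nat) (A : 'M[nat]_N) (B : 'M[int]_N) : Prop :=
  forall i j, A i j = 0%N -> B i j = 0.

Fixpoint is_path_from (N : nat) (A : 'M[nat]_N) (i : 'I_N) (p : seq (edge N)) : bool :=
  match p with
  | [::] => true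
  | (r, s, m) :: q => (r == i) && (m < A r s)%N && is_path_from A s q
  end.

(* action of a_{r(p)}^k on a path p:
   a_i^k . e_{i,j,m} = e_{i,j,mh},  a_i^k|_{e_{i,j,m}} = a_j^{kh},
   where k B_ij + m = kh A_ij + mh, 0 <= mh < A_ij,
   and g . (e nu) = (g . e) (g|_e . nu). *)
Fixpoint kep_act (N : nat) (A : 'M[nat]_N) (B : 'M[int]_N) (k : int)
    (p : seq (edge N)) : seq (edge N) :=
  match p with
  | [::] => [::]
  | (r, s, m) :: q =>
      let x := k * B r s + (m%:Z) in
      (r, s, `|(x %% (A r s)%:Z)%Z|%N) :: kep_act A B (x %/ (A r s)%:Z)%Z q
  end.

Definition acts_trivially (N : nat) (A : 'M[nat]_N) (B : 'M[int]_N)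
    (i : 'I_N) (k : int) : Prop :=
  forall p, is_path_from A i p -> kep_act A B k p = p.

(* (G_B)_i = {a_i^k : k in Z} modulo the elements acting trivially:
   a_i^k and a_i^l are identified iff a_i^(k-l) acts trivially.
   (G_B)_i is finite iff there are finitely many classes. *)
Definition GB_vertex_finite (N : nat) (A : 'M[nat]_N) (B : 'M[int]_N)
    (i : 'I_N) : Prop :=
  exists s : seq int, forall k : int, exists2 l, l \in s & acts_trivially A B i (k - l).

(* If a_i^n acts trivially for some n <> 0, then so does a_i^(n A_ij); restricting
   it to the edge e_{i,j,m} shows that a_j^(n B_ij) acts trivially, and n B_ij <> 0.
   A vertex group (G_B)_v is finite exactly when some nonzero power of a_v acts
   trivially: given finitely many representatives l, an exponent K exceeding them all
   yields the nonzero trivial exponent K - l; conversely the residues modulo a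
   nonzero trivial exponent form a set of representatives. *)

From mathcomp Require Import all_boot all_order all_algebra.
Local Open Scope ring_scope.
Import Order.TTheory GRing.Theory Num.Theory.
Set Implicit Arguments. Unset Strict Implicit.

Section KatsuraAction.
Variables (N : nat) (A : 'M[nat]_N) (B : 'M[int]_N).

Lemma kep_act0 i p : is_path_from A i p -> kep_act A B 0 p = p.
Proof.
elim: p i => [//|[[r s] m] q IHq] i /= /andP[/andP[_ lt_m] path_q].
have m_range : 0 <= m%:Z < (A r s)%:Z by rewrite lez_nat ltz_nat lt_m.
by rewrite mul0r add0r modz_small // divz_small ?gez0_abs // (IHq s).
Qed.

Lemma kep_actD i p k l : is_path_from A i p ->
  kep_act A B l (kep_act A B k p) = kep_act A B (k + l) p.
Proof.
elim: p i k l => [//|[[r s] m] q IHq] i k l /= /andP[/andP[_ lt_m] path_q].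
have A_neq0 : (A r s)%:Z != 0 by rewrite eqz_nat -lt0n (leq_ltn_trans _ lt_m).
set x := k * B r s + m%:Z.
have x_shift : (k + l) * B r s + m%:Z
    = (x %/ (A r s)%:Z)%Z * (A r s)%:Z + (l * B r s + (x %% (A r s)%:Z)%Z).
  by rewrite addrCA -divz_eq /x mulrDl addrCA addrA.
by rewrite gez0_abs ?modz_ge0 // x_shift modzMDl divzMDl // (IHq s).
Qed.

Lemma kep_act_edge_mull r s m q c : (m < A r s)%N ->
  kep_act A B ((A r s)%:Z * c) ((r, s, m) :: q)
  = (r, s, m) :: kep_act A B (c * B r s) q.
Proof.
move=> lt_m; have A_neq0 : (A r s)%:Z != 0.
  by rewrite eqz_nat -lt0n (leq_ltn_trans _ lt_m).
have m_range : 0 <= m%:Z < (A r s)%:Z by rewrite lez_nat ltz_nat lt_m.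
rewrite /= -mulrA mulrC modzMDl divzMDl // modz_small //.
by rewrite divz_small ?gez0_abs // addr0.
Qed.

Lemma acts_triviallyD i k l :
  acts_trivially A B i k -> acts_trivially A B i l -> acts_trivially A B i (k + l).
Proof.
move=> triv_k triv_l p path_p.
by rewrite -(kep_actD _ _ path_p) (triv_k p path_p) (triv_l p path_p).
Qed.

Lemma acts_triviallyN i k : acts_trivially A B i k -> acts_trivially A B i (- k).
Proof.
move=> triv_k p path_p.
by rewrite -{1}(triv_k p path_p) (kep_actD _ _ path_p) subrr (kep_act0 path_p).
Qed.

Lemma acts_triviallyMn i k t : acts_trivially A B i k -> acts_trivially A B i (k *+ t).
Proof.
move=> triv_k; elim: t => [|t IHt]; first by move=> p /kep_act0.
by rewrite mulrS; apply: acts_triviallyD.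
Qed.

Lemma acts_trivially_mull i k t : acts_trivially A B i k -> acts_trivially A B i (t * k).
Proof.
move=> triv_k; case: (intP t) => [|n|n]; first by move=> p /kep_act0; rewrite mul0r.
  by rewrite -natz mulr_natl; apply: acts_triviallyMn.
by rewrite mulNr -natz mulr_natl; apply/acts_triviallyN/acts_triviallyMn.
Qed.

Lemma acts_trivially_edge i j m k : (m < A i j)%N ->
  acts_trivially A B i ((A i j)%:Z * k) -> acts_trivially A B j (k * B i j).
Proof.
move=> lt_m triv_k q path_q.
have path_eq : is_path_from A i ((i, j, m) :: q) by rewrite /= eqxx lt_m.
by have := triv_k _ path_eq; rewrite kep_act_edge_mull // => -[].
Qed.

Lemma GB_vertex_finite_trivial i :
  GB_vertex_finite A B i -> exists2 k, k != 0 & acts_trivially A B i k.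
Proof.
case=> s reps; pose K : int := 1 + \sum_(l <- s) `|l|.
have [l l_s triv_Kl] := reps K; exists (K - l) => //.
have : l <= \sum_(x <- s) `|x|.
  rewrite (le_trans (ler_norm l)) // (big_rem l l_s) /= lerDl.
  by apply: sumr_ge0 => x _.
by rewrite subr_eq0; apply: contraTneq => <-; rewrite /K -ltNge ltrDr.
Qed.

Lemma trivial_GB_vertex_finite i k :
  k != 0 -> acts_trivially A B i k -> GB_vertex_finite A B i.
Proof.
move=> k_neq0 triv_k; exists (map Posz (iota 0 `|k|)) => x.
exists (x %% k)%Z.
  apply/mapP; exists `|(x %% k)%Z|%N; last by rewrite gez0_abs ?modz_ge0.
  by rewrite mem_iota add0n -ltz_nat gez0_abs ?modz_ge0 // ltz_mod.
have -> : x - (x %% k)%Z = (x %/ k)%Z * k by rewrite {1}(divz_eq x k) addrK.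
exact: acts_trivially_mull.
Qed.

End KatsuraAction.

Theorem corollary3p1 (N : nat) (A : 'M[nat]_N) (B : 'M[int]_N) :
  katsura_pair A B ->
  forall (i j : 'I_N) (m : nat),
    (m < A i j)%N ->            (* e = e_{i,j,m} is an edge, r(e) = i, s(e) = j *)
    B i j != 0 ->               (* B_e <> 0 *)
    GB_vertex_finite A B i ->   (* r(e) in E^0_{A,<oo} *)
    GB_vertex_finite A B j.     (* s(e) in E^0_{A,<oo} *)
Proof.
move=> _ i j m lt_m B_neq0 /GB_vertex_finite_trivial[k k_neq0 triv_k].
apply: (@trivial_GB_vertex_finite _ A B j (k * B i j)); first exact: mulf_neq0.
exact/(acts_trivially_edge lt_m)/acts_trivially_mull.
Qed.
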